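(* Let $\gamma=(\gamma_1,\dots,\gamma_b)$ be a parallel map on $V=V_1\oplus\cdots\oplus V_b$, $V_i\cong(\mathbb F_2)^m$, with $0\gamma=0$. Suppose every $\gamma_i$ is differentially $2^r$-uniform with $r<m-1$ and strongly $r$-anti-invariant. If $\gamma$ maps $\mathcal{LA}_U(W_1|W_2)$ onto a non-trivial partition $\mathcal{LA}_{U'}(W_1'|W_2')$, where $U,U'$ satisfy $J_U\cap J_{U'}=\emptyset$, then $W_1,W_1',W_2,W_2'$ are walls and $W_1=W_1'=W_2=W_2'$; in particular both partitions are linear.
   Context: Let $m,b>1$, $n=mb$, $V=(\mathbb F_2)^n=V_1\oplus\cdots\oplus V_b$, $V_i\cong(\mathbb F_2)^m$. Permutations act on the right. A parallel map is $\gamma\in\mathrm{Sym}(V)$ with $(v_1\oplus\cdots\oplus v_b)\gamma=v_1\gamma_1\oplus\cdots\oplus v_b\gamma_b$, $\gamma_i\in\mathrm{Sym}(V_i)$. A wall is $\bigoplus_{i\in I}V_i$ with $\emptyset\ne I\subsetneq\{1,\dots,b\}$. For a subspace $U$ of dimension $n-1$, $J_U=\{j:V_j\cap U\subsetneq V_j\}$. $f:(\mathbb F_2)^m\to(\mathbb F_2)^m$ is differentially $\delta$-uniform if $\delta=\max_{a\ne0,b}|\{x:f(x+a)+f(x)=b\}|$; for $f(0)=0$ and $1\le r<m$, $f$ is strongly $r$-anti-invariant if for all subspaces $A,B$ of $(\mathbb F_2)^m$ with $f(A)=B$, either $\dim A=\dim B<m-r$ or $A=B=(\mathbb F_2)^m$.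 A permutation maps $\mathcal A$ onto $\mathcal B$ if it sends the blocks of $\mathcal A$ exactly onto those of $\mathcal B$; trivial partitions are the singleton partition and $\{V\}$. $\mathcal L(W)=\{W+v:v\in V\}$ (linear partition). For a subspace $U$ of dimension $n-1$ and subspaces $W_1,W_2\subseteq U$, $\mathcal{LA}_U(W_1|W_2)=\{W_1+v:v\in U\}\cup\{(W_2+\bar v)+v:v\in U\}$ for any $\bar v\in V\setminus U$. *)

From mathcomp Require Import all_boot all_order all_algebra all_fingroup.
Set Implicit Arguments. Unset Strict Implicit. Unset Printing Implicit Defensive.
Import GRing.Theory.
Local Open Scope ring_scope.

(* V = (F_2)^(m*b) = V_1 (+) ... (+) V_b is encoded as the space of b x m
   matrices over F_2: row i is the component in V_i = (F_2)^m. *)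
Notation blk m := 'rV['F_2]_m.
Notation VV b m := 'M['F_2]_(b, m).

Section Defs.
Variables (b m : nat).

Definition parallel (g : 'I_b -> {perm blk m}) (x : VV b m) : VV b m :=
  \matrix_(i, j) (g i (row i x)) 0 j.

Definition Vblk (i : 'I_b) : {vspace VV b m} :=
  <<[seq delta_mx i k | k : 'I_m]>>%VS.

Definition wall (W : {vspace VV b m}) : Prop :=
  exists I : {set 'I_b}, [/\ I != set0, I != setT & W = (\sum_(i in I) Vblk i)%VS].

Definition Jset (U : {vspace VV b m}) : {set 'I_b} :=
  [set j | (Vblk j :&: U != Vblk j)%VS].

Definition coset (W : {vspace VV b m}) (v : VV b m) : {set VV b m} :=
  [set x | x - v \in W].

Definition Lpart (W : {vspace VV b m}) : {set {set VV b m}} :=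
  [set coset W v | v : VV b m].

(* LA_U(W1|W2), with vbar a chosen element of V \ U (the definition does not
   depend on the choice when dim U = n-1 and W2 <= U). *)
Definition LA (U W1 W2 : {vspace VV b m}) : {set {set VV b m}} :=
  let vbar := odflt 0 [pick x : VV b m | x \notin U] in
  [set coset W1 v | v in [set x : VV b m | x \in U]] :|:
  [set coset W2 (vbar + v) | v in [set x : VV b m | x \in U]].

Definition singleton_partition : {set {set VV b m}} := [set [set x] | x : VV b m].
Definition full_partition : {set {set VV b m}} := [set [set: VV b m]].
Definition nontrivial (P : {set {set VV b m}}) : Prop :=
  P != singleton_partition /\ P != full_partition.

Definition maps_onto (f : VV b m -> VV b m) (A B : {set {set VV b m}}) : Prop :=
  [set [set f x | x in X] | X : {set VV b m} in A] = B.

End Defs.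

Section Sbox.
Variable m : nat.

Definition diff_uniform (f : blk m -> blk m) (delta : nat) : Prop :=
  delta = (\max_(a : blk m | a != 0%R) \max_(c : blk m)
             #|[set x : blk m | (f (x + a) + f x == c)%R]|)%N.

Definition strongly_anti_invariant (r : nat) (f : blk m -> blk m) : Prop :=
  [/\ f 0 = 0, (1 <= r < m)%N &
   forall A B : {vspace blk m},
     [set f x | x in [set y : blk m | y \in A]] = [set y : blk m | y \in B] ->
     (\dim A = \dim B /\ (\dim B < m - r)%N) \/ (A = fullv /\ B = fullv)].

End Sbox.

From Pilot Require Import Defs.
From mathcomp Require Import all_boot all_order all_algebra all_fingroup.
From mathcomp Require Import all_field zify.
Set Implicit Arguments. Unset Strict Implicit. Unset Printing Implicit Defensive.
Import GRing.Theory.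
Local Open Scope ring_scope.

(* Saying that gamma maps LA_U(W1|W2) onto LA_U'(W1'|W2') is saying that
   gamma transports the equivalence "y lies in the block of x" (la_rel).  On a
   single summand V_l this constrains the permutation g_l alone, and there
   differential 2^r-uniformity and strong r-anti-invariance leave only the
   trivial possibilities: W1 meets V_l in 0 or contains it.  So W1 is a sum of
   summands V_i, a wall; gamma acts summand by summand, which gives W1' = W1;
   and comparing the blocks through a point of some V_k outside U (resp. U')
   gives W2 = W1 (resp. W2' = W1). *)

Lemma F2_cases (k : 'F_2) : k = 0 \/ k = 1.
Proof. by case: k => [[|[|]]] //= ?; [left | right]; apply: val_inj. Qed.

Lemma oppF2 (V : lmodType 'F_2) (v : V) : - v = v.
Proof. by rewrite -scaleN1r (_ : -1 = 1) ?scale1r //; apply: val_inj. Qed.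

Lemma addrrF2 (V : lmodType 'F_2) (v : V) : v + v = 0.
Proof. by rewrite -{2}[v]oppF2 subrr. Qed.

Lemma addF2_eq0 (V : lmodType 'F_2) (u v : V) : (u + v == 0) = (u == v).
Proof. by rewrite -{1}[v]oppF2 subr_eq0. Qed.

Section Hyperplane.
Variables (vT : vectType 'F_2) (U : {vspace vT}).
Hypothesis hypU : (\dim U).+1 = \dim {:vT}.

Lemma hyperplane_exists_notin : exists x, x \notin U.
Proof.
have /subvPn[x _ xU] : ~~ (fullv <= U)%VS.
  by apply: contraTN isT => /dimvS; rewrite -hypU ltnn.
by exists x.
Qed.

Lemma hyperplane_subr x y : x \notin U -> y \notin U -> x - y \in U.
Proof.
move=> xU yU.
have : x \in (U + <[y]>)%VS.
  suff -> : (U + <[y]>)%VS = fullv by rewrite memvf.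
  apply/eqP; rewrite eqEdim subvf -hypU /=.
  rewrite (ltn_leqif (dimv_leqif_eq (addvSl U <[y]>))).
  apply: contra yU => /eqP->; by have := memv_add (mem0v U) (memv_line y); rewrite add0r.
case/memv_addP => u uU [_ /vlineP[k ->] xE]; subst x.
case: (F2_cases k) xU => ->; last by rewrite scale1r addrK.
by rewrite scale0r addr0 uU.
Qed.

Lemma dim_preim_hyperplane (aT : vectType 'F_2) (f : 'Hom(aT, vT)) :
  (f @^-1: U)%VS != fullv -> (\dim (f @^-1: U)).+1 = \dim {:aT}.
Proof.
set P := (f @^-1: U)%VS => Pproper.
have /subvPn[c _ cP] : ~~ (fullv <= P)%VS by move: Pproper; rewrite eqEsubv subvf.
apply/eqP; rewrite eqn_leq (ltn_leqif (dimv_leqif_eq (subvf P))) Pproper /=.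
have : (fullv <= P + <[c]>)%VS.
  apply/subvP => t _; have [tP|tP] := boolP (t \in P).
    by rewrite -[t]addr0 memv_add ?mem0v.
  rewrite -[t](subrK c) memv_add ?memv_line // /P -memv_preim linearB.
  by rewrite hyperplane_subr // memv_preim.
move/dimvS/leq_trans; apply; apply: leq_trans (dimv_add_leqif _ _) _.
by rewrite -[(\dim P).+1]addn1 leq_add2l dim_vline leq_b1.
Qed.

End Hyperplane.

Lemma imset_classes_rel (T : finType) (e e' : rel T) (f : T -> T) :
    injective f -> reflexive e -> equivalence_rel e' ->
    [set f @: X | X : {set T} in [set [set y | e x y] | x : T]]
      \subset [set [set y | e' x y] | x : T] ->
  forall x y, e x y = e' (f x) (f y).
Proof.
move=> injf refl_e equiv_e' /subsetP sub_cls x y.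
have /imsetP[z _ fcls_x] : f @: [set y | e x y] \in [set [set y | e' x y] | x : T].
  by apply/sub_cls/imset_f/imset_f.
have : f x \in [set y | e' z y] by rewrite -fcls_x imset_f ?inE.
rewrite inE => /(snd (equiv_e' z (f x) (f y))) <-.
have := mem_imset [set y | e x y] y injf.
by rewrite fcls_x !inE.
Qed.

Section LArel.
Variables (K : fieldType) (vT : vectType K) (U W1 W2 : {vspace vT}).

Definition la_rel x y := if x \in U then y - x \in W1 else y - x \in W2.

Lemma la_rel_addr x w : la_rel x (x + w) = if x \in U then w \in W1 else w \in W2.
Proof. by rewrite /la_rel addrC addKr. Qed.

Lemma la_rel_refl : reflexive la_rel.
Proof. by move=> x; rewrite /la_rel subrr !mem0v if_same. Qed.

Hypotheses (sW1U : (W1 <= U)%VS) (sW2U : (W2 <= U)%VS).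

Lemma la_rel_equiv : equivalence_rel la_rel.
Proof.
move=> x y z; split; first exact: la_rel_refl.
have memB (W : {vspace vT}) : y - x \in W -> (z - x \in W) = (z - y \in W).
  by move=> Wyx; rewrite -(rpredDr (z - y) Wyx) addrA subrK.
rewrite /la_rel; case: ifP => xU Hxy; rewrite (memB _ Hxy).
  suff -> : y \in U by [].
  by rewrite -[y](subrK x); apply: rpredD => //; apply: (subvP sW1U).
suff -> : y \in U = false by [].
apply: contraFF xU => yU; rewrite -[x](subrK y) -opprB.
by apply: rpredD; rewrite // rpredN; apply: (subvP sW2U).
Qed.

End LArel.

Lemma la_rel_fullv (K : fieldType) (vT : vectType K) (W1 W2 : {vspace vT}) x y :
  la_rel fullv W1 W2 x y = (y - x \in W1).
Proof. by rewrite /la_rel memvf. Qed.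

Section Partitions.
Variables (b m : nat).
Implicit Types (U W : {vspace VV b m}) (x y : VV b m).

Lemma LA_classes U W1 W2 :
  (\dim U).+1 = \dim {:VV b m} ->
  LA U W1 W2 = [set [set y | la_rel U W1 W2 x y] | x : VV b m].
Proof.
move=> hypU; rewrite /LA; set vbar := odflt 0 _.
have vbarU : vbar \notin U.
  rewrite /vbar; case: pickP => [//| notinU].
  by have [x] := hyperplane_exists_notin hypU; rewrite notinU.
have cls_coset x : [set y | la_rel U W1 W2 x y] =
                   if x \in U then Defs.coset W1 x else Defs.coset W2 x.
  by apply/setP => y; rewrite /la_rel; case: ifP; rewrite !inE.
apply/setP => X; rewrite inE; apply/orP/imsetP => [|[x _ ->]].
  case=> /imsetP[v]; rewrite inE => vU ->.
    by exists v; rewrite // cls_coset vU.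
  by exists (vbar + v); rewrite // cls_coset rpredDr // (negbTE vbarU).
rewrite cls_coset; case: ifP => xU; [left | right]; apply/imsetP.
  by exists x; rewrite ?inE.
by exists (x - vbar); rewrite ?inE ?hyperplane_subr ?xU // addrC subrK.
Qed.

Lemma LA_Lpart U W : (\dim U).+1 = \dim {:VV b m} -> LA U W W = Lpart W.
Proof.
move=> hypU; rewrite LA_classes //.
by apply: eq_imset => x; apply/setP => y; rewrite !inE /la_rel if_same.
Qed.

Lemma Lpart0 : Lpart (0%VS : {vspace VV b m}) = singleton_partition b m.
Proof. by apply: eq_imset => v; apply/setP => y; rewrite !inE memv0 subr_eq0. Qed.

Lemma maps_onto_la_rel (f : VV b m -> VV b m) U W1 W2 U' W1' W2' :
    injective f ->
    (\dim U).+1 = \dim {:VV b m} -> (W1 <= U)%VS -> (W2 <= U)%VS ->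
    (\dim U').+1 = \dim {:VV b m} -> (W1' <= U')%VS -> (W2' <= U')%VS ->
    maps_onto f (LA U W1 W2) (LA U' W1' W2') ->
  forall x y, la_rel U W1 W2 x y = la_rel U' W1' W2' (f x) (f y).
Proof.
move=> injf hypU sW1 sW2 hypU' sW1' sW2'; rewrite /maps_onto !LA_classes // => fLA.
apply: imset_classes_rel => //; first exact: la_rel_refl.
  exact: la_rel_equiv.
by rewrite fLA.
Qed.

End Partitions.

Section Blocks.
Variables (b m : nat).
Implicit Types (U W : {vspace VV b m}) (x y : VV b m) (t s : blk m) (l : 'I_b).

Definition emb l : 'Hom(blk m, VV b m) := linfun (mulmx (delta_mx l 0)).

Definition blockv W l : {vspace blk m} := (emb l @^-1: W)%VS.

Lemma mem_blockv W l t : (t \in blockv W l) = (emb l t \in W).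
Proof. by rewrite -memv_preim. Qed.

Lemma row_emb i l t : row i (emb l t) = if i == l then t else 0.
Proof.
rewrite lfunE /= rowE mulmxA mul_delta_mx_cond eq_sym.
by case: eqP => _; rewrite ?mulr0n ?mul0mx // mulr1n -rowE row_id.
Qed.

Lemma sum_emb_row x : x = \sum_i emb i (row i x).
Proof.
apply/row_matrixP => k; rewrite raddf_sum (bigD1 k) //= row_emb eqxx big1 ?addr0 //.
by move=> i; rewrite row_emb eq_sym => /negbTE->.
Qed.

Lemma Vblk_limg l : Vblk m l = limg (emb l).
Proof.
have emb_delta k : emb l (delta_mx 0 k) = delta_mx l k.
  by rewrite lfunE /= mul_delta_mx.
apply/eqP; rewrite eqEsubv; apply/andP; split.
  apply/span_subvP => _ /mapP[k _ ->].
  by rewrite -emb_delta memv_img ?memvf.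
apply/subvP => _ /memv_imgP[t _ ->]; rewrite lfunE /= [t]row_sum_delta mulmx_sumr.
apply: rpred_sum => k _; rewrite -scalemxAr mul_delta_mx.
by apply/rpredZ/memv_span/map_f; rewrite mem_enum.
Qed.

Lemma Vblk_sub l W : (Vblk m l <= W)%VS = (blockv W l == fullv).
Proof.
rewrite Vblk_limg eqEsubv subvf andTb; apply/subvP/subvP => [sub t _|sub y].
  by rewrite mem_blockv sub ?memv_img ?memvf.
by case/memv_imgP => t _ ->; rewrite -mem_blockv sub ?memvf.
Qed.

Lemma in_Jset U l : (l \in Jset U) = (blockv U l != fullv).
Proof. by rewrite inE -Vblk_sub; congr (~~ _); apply/eqP/capv_idPl. Qed.

Lemma mem_emb_notin_Jset U l t : l \notin Jset U -> emb l t \in U.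
Proof. by rewrite in_Jset negbK => /eqP full; rewrite -mem_blockv full memvf. Qed.

Lemma blockv_full U l : l \notin Jset U -> blockv U l = fullv.
Proof. by rewrite in_Jset negbK => /eqP. Qed.

Lemma Jset_exists_notin U l : l \in Jset U -> exists t, emb l t \notin U.
Proof.
rewrite in_Jset eqEsubv subvf /= => /subvPn[t _]; rewrite mem_blockv.
by exists t.
Qed.

Lemma card_blockv_Jset U l :
    (\dim U).+1 = \dim {:VV b m} -> l \in Jset U ->
  #|[set t | t \in blockv U l]| = (2 ^ m.-1)%N.
Proof.
move=> hypU; rewrite in_Jset => /(dim_preim_hyperplane hypU).
rewrite dimvf dim_matrix mul1r => dimE.
by rewrite cardsE card_vspace card_Fp // -[in RHS]dimE.
Qed.

Lemma la_rel_emb U W1 W2 l t s :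
  la_rel U W1 W2 (emb l t) (emb l s) = la_rel (blockv U l) (blockv W1 l) (blockv W2 l) t s.
Proof. by rewrite /la_rel !mem_blockv linearB. Qed.

Lemma Jset_nonempty U : (\dim U).+1 = \dim {:VV b m} -> exists l, l \in Jset U.
Proof.
move=> hypU; have [x xU] := hyperplane_exists_notin hypU.
apply/existsP; apply: contraR xU => /existsPn notJ.
by rewrite [x]sum_emb_row; apply: rpred_sum => i _; apply: mem_emb_notin_Jset.
Qed.

Lemma mem_sum_Vblk (I : {set 'I_b}) x :
  (x \in (\sum_(i in I) Vblk m i)%VS) = [forall i in ~: I, row i x == 0].
Proof.
apply/memv_sumP/forall_inP => [[v vV ->] j|rows0].
  rewrite inE => jI; rewrite raddf_sum /= big1 // => i iI.
  have /memv_imgP[t _ ->] : v i \in limg (emb i) by rewrite -Vblk_limg vV.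
  by rewrite row_emb; case: eqP => // ji; rewrite ji iI in jI.
exists (fun i => emb i (row i x)) => [i _|]; first by rewrite Vblk_limg memv_img ?memvf.
rewrite [LHS]sum_emb_row (bigID (mem I)) /= [X in _ + X]big1 ?addr0 // => i iI.
by rewrite (eqP (rows0 i _)) ?linear0 ?inE.
Qed.

Definition wall_index W : {set 'I_b} := [set i | (Vblk m i <= W)%VS].

End Blocks.

Arguments emb {b m} l.

Lemma leq_card_fibres (T R : finType) (X : {set T}) (S : {set R}) (phi : T -> R) k :
    {in X, forall x, phi x \in S} ->
    (forall s, s \in S -> #|[set x in X | phi x == s]| <= k)%N ->
  (#|X| <= #|S| * k)%N.
Proof.
move=> phiS fibre_le; rewrite -sum1_card (partition_big phi (mem S)) //=.
rewrite -sum_nat_const; apply: leq_sum => s sS; apply: leq_trans (fibre_le s sS).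
by rewrite -sum1_card; apply: eq_leq; apply: eq_bigl => x; rewrite inE.
Qed.

Section Sbox.
Variable m : nat.
Implicit Types (f : {perm blk m}) (t s : blk m) (E D : {vspace blk m}).

Lemma card_blk : #|{: blk m}| = (2 ^ m)%N.
Proof. by rewrite card_mx card_Fp // mul1n. Qed.

Lemma card_vspace_blk E : #|[set t | t \in E]| = (2 ^ \dim E)%N.
Proof. by rewrite cardsE card_vspace card_Fp. Qed.

Lemma perm_imset_vspace f E D :
  (forall t, (t \in E) = (f t \in D)) -> f @: [set t | t \in E] = [set t | t \in D].
Proof.
move=> fED; apply/setP => u; rewrite inE -[u](permKV f) mem_imset ?inE -?fED //.
exact: perm_inj.
Qed.

Definition diff_bounded (h : blk m -> blk m) (d : nat) :=
  forall a c, a != 0 -> (#|[set x | (h (x + a) + h x == c)%R]| <= d)%N.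

Lemma diff_uniform_bounded (h : blk m -> blk m) d :
  diff_uniform h d -> diff_bounded h d.
Proof.
move=> -> a c a0; rewrite (bigD1 a a0) /=; apply: leq_trans (leq_maxl _ _).
by rewrite (bigD1 c) //=; apply: leq_maxl.
Qed.

Lemma diff_bounded_inv f d : diff_bounded f d -> diff_bounded (f^-1)%g d.
Proof.
move=> fd a c a0; have [->|c0] := eqVneq c 0.
  rewrite (_ : [set x | _] = set0) ?cards0 //; apply/setP => y; rewrite !inE.
  by rewrite addF2_eq0 (inj_eq perm_inj) -{2}[y]addr0 (inj_eq (addrI y)) (negbTE a0).
apply: leq_trans (fd c a c0); rewrite -(card_imset _ (@perm_inj _ (f^-1)%g)).
apply/subset_leq_card/subsetP => x /imsetP[y]; rewrite !inE => /eqP <- ->.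
by rewrite addrCA addrrF2 addr0 !permKV addrAC addrrF2 add0r.
Qed.

Lemma strongly_anti_invariant_inv r f :
  strongly_anti_invariant r f -> strongly_anti_invariant r (f^-1)%g.
Proof.
case=> f0 r_bounds fai; split=> [|//|A B fAB]; first by rewrite -{1}f0 permK.
have : f @: [set t | t \in B] = [set t | t \in A].
  by rewrite -fAB -imset_comp (eq_imset _ (permKV f)) imset_id.
by case/fai => [[-> ?]|[-> ->]]; [left | right].
Qed.

Lemma diff_bounded_card_le f r a (X : {set blk m}) D :
    diff_bounded f (2 ^ r) -> a != 0 ->
    {in X, forall t, f (t + a) - f t - f a \in D} ->
  (#|X| <= 2 ^ (\dim D + r))%N.
Proof.
move=> fd a0 inD; rewrite expnD -card_vspace_blk.
apply: (leq_card_fibres (phi := fun t => f (t + a) - f t - f a)) => [t /inD|s _].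
  by rewrite inE.
apply: leq_trans (fd a (s + f a) a0); apply/subset_leq_card/subsetP => t.
by rewrite !inE => /andP[_ /eqP <-]; rewrite subrK oppF2.
Qed.

(* A nonzero t in E would send every difference f (x + t) - f x into D :|: D2,
   a set of fewer than 2 ^ (dim E).+1 points, so differential uniformity
   forces dim E >= m - r; anti-invariance of f(E) = D then makes D the whole
   space, although D lies in the proper subspace H. *)
Lemma la_rel_transfer_eq0 f r (E H D D2 : {vspace blk m}) :
    diff_bounded f (2 ^ r) -> strongly_anti_invariant r f ->
    (D <= H)%VS -> H != fullv ->
    (forall t s, (s - t \in E) = la_rel H D D2 (f t) (f s)) ->
  E = 0%VS.
Proof.
move=> fd [f0 _ fai] sDH Hproper rel.
have fED : f @: [set t | t \in E] = [set t | t \in D].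
  by apply: perm_imset_vspace => t; have := rel 0 t; rewrite subr0 f0 /la_rel mem0v subr0.
have [c _ cH] : exists2 c, c \in fullv & c \notin H.
  by apply/subvPn; move: Hproper; rewrite eqEsubv subvf.
have cardD2 : (#|[set u | u \in D2]| <= 2 ^ \dim E)%N.
  pose phi u := (f^-1)%g (c + u) - (f^-1)%g c.
  have phi_inj : injective phi by move=> u v /addIr/perm_inj/addrI.
  rewrite -card_vspace_blk -(card_imset _ phi_inj).
  apply/subset_leq_card/subsetP => x /imsetP[u].
  by rewrite !inE => uD2 ->; rewrite rel !permKV /la_rel (negbTE cH) addrC addKr.
apply/eqP; apply: contraT => E0.
have tE := memv_pick E; have t0 : vpick E != 0 by rewrite vpick0.
set S := [set u | u \in D] :|: [set u | u \in D2].
have : (#|[set: blk m]| <= #|S| * 2 ^ r)%N.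
  apply: (leq_card_fibres (phi := fun x => f (x + vpick E) + f x)) => [x _|s _].
    have := rel x (x + vpick E); rewrite [_ - x]addrC addKr tE /la_rel !inE !oppF2.
    by case: ifP => _ <-; rewrite ?orbT.
  apply: leq_trans (fd _ s t0); apply/subset_leq_card/subsetP => x.
  by rewrite !inE.
have cardS : (#|S| < 2 ^ (\dim E).+1)%N.
  have : (0 < #|[set u | u \in D] :&: [set u | u \in D2]|)%N.
    by apply/card_gt0P; exists 0; rewrite !inE !mem0v.
  have cardD : #|[set u | u \in D]| = (2 ^ \dim E)%N.
    by rewrite -fED card_imset ?card_vspace_blk //; apply: perm_inj.
  rewrite /S cardsU cardD expnS; lia.
rewrite cardsT card_blk => count.
have : (2 ^ m < 2 ^ ((\dim E).+1 + r))%N.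
  by rewrite expnD; apply: (leq_ltn_trans count); rewrite ltn_pmul2r ?expn_gt0.
rewrite ltn_exp2l // => m_lt.
have /fai[[dimED dimD]|[_ Dfull]] := fED.
  by lia.
by move: Hproper; rewrite eqEsubv subvf -Dfull sDH.
Qed.

End Sbox.

Section Parallel.
Variables (b m : nat).
Implicit Types (x w : VV b m) (t : blk m) (l : 'I_b).

Lemma row_parallel (h : 'I_b -> {perm blk m}) i x : row i (parallel h x) = h i (row i x).
Proof. by apply/rowP => j; rewrite !mxE. Qed.

Variable g : 'I_b -> {perm blk m}.

Lemma parallelK : cancel (parallel g) (parallel (fun i => (g i)^-1)%g).
Proof. by move=> x; apply/row_matrixP => i; rewrite !row_parallel permK. Qed.

Lemma parallelKV : cancel (parallel (fun i => (g i)^-1)%g) (parallel g).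
Proof. by move=> x; apply/row_matrixP => i; rewrite !row_parallel permKV. Qed.

Lemma parallel_inj : injective (parallel g).
Proof. exact: can_inj parallelK. Qed.

Lemma row_parallel_diff_eq0 i x w :
  (row i (parallel g (x + w) - parallel g x) == 0) = (row i w == 0).
Proof.
rewrite raddfB /= !row_parallel raddfD /= subr_eq0 (inj_eq perm_inj).
by rewrite -{2}[row i x]addr0 (inj_eq (addrI _)).
Qed.

Hypothesis parallel0 : parallel g 0 = 0.

Lemma perm_parallel0 i : g i 0 = 0.
Proof. by have := congr1 (row i) parallel0; rewrite row_parallel !raddf0. Qed.

Lemma parallel_emb l t : parallel g (emb l t) = emb l (g l t).
Proof.
apply/row_matrixP => i; rewrite row_parallel !row_emb.
by case: eqP => [->|_]; rewrite ?perm_parallel0.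
Qed.

Lemma parallel_emb_addr l t x :
  parallel g (emb l t + x) - parallel g (emb l t) - parallel g x =
  emb l (g l (t + row l x) - g l t - g l (row l x)).
Proof.
apply/row_matrixP => i; rewrite !raddfB /= !row_parallel raddfD /= !row_emb.
by case: eqP => [->|_]; rewrite // add0r perm_parallel0 !subr0 subrr.
Qed.

End Parallel.

Section Transfer.
Variables (m b r : nat) (g : 'I_b -> {perm blk m}).
Variables (U W1 W2 U' W1' W2' : {vspace VV b m}).
Local Notation gamma := (parallel g).
Hypotheses (gamma0 : gamma 0 = 0) (r_lt : (r < m - 1)%N)
  (du : forall i, diff_bounded (g i) (2 ^ r))
  (sai : forall i, strongly_anti_invariant r (g i)).
Hypotheses (hypU : (\dim U).+1 = \dim {:VV b m}) (sW1 : (W1 <= U)%VS).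
Hypotheses (hypU' : (\dim U').+1 = \dim {:VV b m}) (sW1' : (W1' <= U')%VS).
Hypothesis disjJ : Jset U :&: Jset U' = set0.
Hypothesis rel : forall x y, la_rel U W1 W2 x y = la_rel U' W1' W2' (gamma x) (gamma y).

Lemma notin_Jset' l : l \in Jset U -> l \notin Jset U'.
Proof. by move=> lJ; apply/negP => lJ'; have := in_set0 l; rewrite -disjJ inE lJ lJ'. Qed.

Lemma notin_Jset l : l \in Jset U' -> l \notin Jset U.
Proof. by apply: contraL => /notin_Jset' /negbTE ->. Qed.

Lemma W1_transfer a : (a \in W1) = (gamma a \in W1').
Proof. by have := rel 0 a; rewrite gamma0 /la_rel !mem0v !subr0. Qed.

Lemma la_rel_blockv_transfer l t s :
  la_rel (blockv U l) (blockv W1 l) (blockv W2 l) t s =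
  la_rel (blockv U' l) (blockv W1' l) (blockv W2' l) (g l t) (g l s).
Proof. by rewrite -!la_rel_emb -!parallel_emb. Qed.

Lemma blockv_W1_Jset' l : l \in Jset U' -> blockv W1 l = 0%VS.
Proof.
move=> lJ'; apply: (la_rel_transfer_eq0 (H := blockv U' l) (D2 := blockv W2' l)
  (du l) (sai l) (lpreimS _ sW1')); first by rewrite -in_Jset.
move=> t s; rewrite -la_rel_blockv_transfer.
by rewrite (blockv_full (notin_Jset lJ')) la_rel_fullv.
Qed.

Lemma blockv_W1'_Jset l : l \in Jset U -> blockv W1' l = 0%VS.
Proof.
move=> lJ; apply: (la_rel_transfer_eq0 (H := blockv U l) (D2 := blockv W2 l)
  (diff_bounded_inv (du l))
  (strongly_anti_invariant_inv (sai l)) (lpreimS _ sW1)); first by rewrite -in_Jset.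
move=> t s; rewrite la_rel_blockv_transfer !permKV.
by rewrite (blockv_full (notin_Jset' lJ)) la_rel_fullv.
Qed.

Lemma imset_blockv_W1 l :
  g l @: [set t | t \in blockv W1 l] = [set u | u \in blockv W1' l].
Proof.
by apply: perm_imset_vspace => t; rewrite !mem_blockv W1_transfer parallel_emb.
Qed.

Lemma dim_blockv_W1' l : \dim (blockv W1' l) = \dim (blockv W1 l).
Proof.
apply/eqP; rewrite -(eqn_exp2l _ _ (ltnSn 1)) -!card_vspace_blk -imset_blockv_W1.
by rewrite card_imset //; apply: perm_inj.
Qed.

(* For t in X the difference g_l (t + a_l) - g_l t lies in g_l a_l + blockv W1' l,
   so #|X| <= 2 ^ (dim (blockv W1' l) + r).  For l in Jset U or Jset U' that
   block is 0 while #|X| = 2 ^ m.-1 > 2 ^ r; otherwise X is everything and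
   anti-invariance applies to g_l (blockv W1 l) = blockv W1' l. *)
Lemma W1_row_blockv_full l a : a \in W1 -> row l a != 0 -> blockv W1 l = fullv.
Proof.
move=> aW1 al0; set X := [set t | (t \in blockv U l) && (g l t \in blockv U' l)].
have cardX : (#|X| <= 2 ^ (\dim (blockv W1' l) + r))%N.
  apply: (diff_bounded_card_le (du l) al0) => t; rewrite inE !mem_blockv => /andP[tU gtU].
  have := rel (emb l t) (emb l t + a); rewrite la_rel_addr tU aW1 parallel_emb //.
  rewrite /la_rel gtU -(parallel_emb gamma0) -(parallel_emb_addr gamma0) => /esym W1'diff.
  by rewrite rpredB // -W1_transfer.
have small_cardX : (#|X| <= 2 ^ r)%N -> #|X| <> (2 ^ m.-1)%N.
  by move=> le_r cardE; move: le_r; rewrite cardE leq_exp2l //; lia.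
have notJ : l \notin Jset U.
  apply/negP => lJ; apply: small_cardX.
    by rewrite blockv_W1'_Jset // dimv0 in cardX.
  rewrite -(card_blockv_Jset hypU lJ); apply: eq_card => t.
  by rewrite !inE (blockv_full (notin_Jset' lJ)) memvf andbT.
have notJ' : l \notin Jset U'.
  apply/negP => lJ'; apply: small_cardX.
    by rewrite dim_blockv_W1' blockv_W1_Jset' // dimv0 in cardX.
  rewrite -(card_blockv_Jset hypU' lJ').
  rewrite -(card_preimset [set u | u \in blockv U' l] (@perm_inj _ (g l))).
  by apply: eq_card => t; rewrite !inE (blockv_full notJ) memvf.
have : (m <= \dim (blockv W1' l) + r)%N.
  rewrite -(@leq_exp2l 2) // -card_blk -cardsT; apply: leq_trans cardX.
  by apply/subset_leq_card/subsetP => t _; rewrite inE !blockv_full ?memvf.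
have [_ _ fai] := sai l.
by case: (fai _ _ (imset_blockv_W1 l)) => [[<-]|[]//]; lia.
Qed.

Lemma mem_W1 x : (x \in W1) = [forall i in ~: wall_index W1, row i x == 0].
Proof.
apply/idP/forall_inP => [xW1 i|rows0].
  rewrite !inE => iW1; apply: contraR iW1 => xi0.
  by rewrite Vblk_sub (W1_row_blockv_full xW1 xi0).
rewrite [x]sum_emb_row; apply: memv_suml => i _.
have [iW1|iW1] := boolP (i \in wall_index W1).
  by rewrite -mem_blockv; move: iW1; rewrite inE Vblk_sub => /eqP->; rewrite memvf.
have /eqP-> : row i x == 0 by apply: rows0; rewrite in_setC.
by have := mem0v (blockv W1 i); rewrite mem_blockv.
Qed.

Lemma W1_sum_Vblk : W1 = (\sum_(i in wall_index W1) Vblk m i)%VS.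
Proof. by apply/vspaceP => x; rewrite mem_sum_Vblk mem_W1. Qed.

Lemma mem_W1_parallel_diff x w : (gamma (x + w) - gamma x \in W1) = (w \in W1).
Proof.
by rewrite !mem_W1; apply: eq_forallb_in => i _; rewrite row_parallel_diff_eq0.
Qed.

Lemma W1'_eq : W1' = W1.
Proof.
apply/vspaceP => y; rewrite -[y](parallelKV g) -W1_transfer.
by rewrite -(mem_W1_parallel_diff 0) add0r gamma0 subr0.
Qed.

Lemma W2_eq : W2 = W1.
Proof.
have [k kJ] := Jset_nonempty hypU; have [c cU] := Jset_exists_notin kJ.
apply/vspaceP => w; have := rel (emb k c) (emb k c + w).
rewrite la_rel_addr (negbTE cU) /la_rel parallel_emb //.
rewrite mem_emb_notin_Jset ?notin_Jset' // W1'_eq -(parallel_emb gamma0).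
by rewrite mem_W1_parallel_diff.
Qed.

Lemma W2'_eq : W2' = W1.
Proof.
have [j jJ'] := Jset_nonempty hypU'; have [c cU'] := Jset_exists_notin jJ'.
set x := emb j ((g j)^-1%g c).
have gx : gamma x = emb j c by rewrite parallel_emb // permKV.
apply/vspaceP => y; set w := parallel (fun i => (g i)^-1)%g (gamma x + y) - x.
have gxw : gamma (x + w) = gamma x + y by rewrite addrC subrK parallelKV.
have := rel x (x + w); rewrite la_rel_addr mem_emb_notin_Jset ?notin_Jset //.
rewrite /la_rel gx (negbTE cU') -gx gxw addrC addKr => <-.
by rewrite -(mem_W1_parallel_diff x) gxw addrC addKr.
Qed.

Lemma wall_W1 : LA U' W1' W2' != singleton_partition b m -> wall W1.
Proof.
move=> nt; exists (wall_index W1); split; last exact: W1_sum_Vblk.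
  apply: contraNneq nt => I0.
  by rewrite W1'_eq W2'_eq LA_Lpart // W1_sum_Vblk I0 big_set0 Lpart0.
apply/eqP => IT; have [x /negP] := hyperplane_exists_notin hypU; apply.
by apply: (subvP sW1); rewrite mem_W1 IT setCT; apply/forall_inP => i; rewrite inE.
Qed.

Lemma LA_linear_walls :
  nontrivial (LA U' W1' W2') ->
  [/\ wall W1, wall W1', wall W2 & wall W2'] /\
  [/\ W1 = W1', W1' = W2 & W2 = W2'] /\
  (LA U W1 W2 = Lpart W1 /\ LA U' W1' W2' = Lpart W1').
Proof.
case=> /wall_W1 wW1 _.
by rewrite W1'_eq W2_eq W2'_eq; do !split => //; apply: LA_Lpart.
Qed.

End Transfer.

Theorem lemma3p12 (m b r : nat) (g : 'I_b -> {perm 'rV['F_2]_m})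
    (U W1 W2 U' W1' W2' : {vspace 'M['F_2]_(b, m)}) :
  (1 < m)%N -> (1 < b)%N ->
  parallel g 0 = 0 ->
  (forall i, diff_uniform (g i) (2 ^ r)) ->
  (r < m - 1)%N ->
  (forall i, strongly_anti_invariant r (g i)) ->
  \dim U = (m * b).-1 -> (W1 <= U)%VS -> (W2 <= U)%VS ->
  \dim U' = (m * b).-1 -> (W1' <= U')%VS -> (W2' <= U')%VS ->
  Jset U :&: Jset U' = set0 ->
  maps_onto (parallel g) (LA U W1 W2) (LA U' W1' W2') ->
  nontrivial (LA U' W1' W2') ->
  [/\ wall W1, wall W1', wall W2 & wall W2'] /\
  [/\ W1 = W1', W1' = W2 & W2 = W2'] /\
  (LA U W1 W2 = Lpart W1 /\ LA U' W1' W2' = Lpart W1').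
Proof.
move=> m_gt1 b_gt1 gamma0 du r_lt sai dimU sW1 sW2 dimU' sW1' sW2' disjJ gLA.
have hyperplane (V : {vspace VV b m}) :
    \dim V = (m * b).-1 -> (\dim V).+1 = \dim {:VV b m}.
  by move=> ->; rewrite dimvf dim_matrix mulnC prednK // muln_gt0; lia.
have hypU := hyperplane U dimU; have hypU' := hyperplane U' dimU'.
apply: (LA_linear_walls gamma0 r_lt (fun i => diff_uniform_bounded (du i)) sai
  hypU sW1 hypU' sW1' disjJ).
exact: (maps_onto_la_rel (@parallel_inj _ _ g) hypU sW1 sW2 hypU' sW1' sW2' gLA).
Qed.
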